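(* Let $d\ge 2$. For each rank-one projector $\Pi$ on $\mathbb{C}^d$ define the map $\Phi_\Pi:{\cal L}(\mathbb{C}^d)\to{\cal L}(\mathbb{C}^d)$ by $\Phi_\Pi(X)=\Pi X\Pi$, and let $\Phi(X)=\frac{1}{d(d+1)}\big(({\rm tr}\,X)I+X\big)$. Suppose $\Phi=\sum_{i=1}^{n}\pi_i\Phi_{\Pi_i}$ for some $n\le d^2$, rank-one projectors $\Pi_1,\dots,\Pi_n$, and weights $\pi_i>0$ with $\sum_i\pi_i=1$. Then $n=d^2$, $\pi_i=\frac{1}{d^2}$ for all $i$, and ${\rm tr}(\Pi_i\Pi_j)=\frac{1}{d+1}$ for all $i\ne j$; that is, the $\Pi_i$ with weights $1/d^2$ form a SIC ensemble.
   Context: ${\cal L}(\mathbb{C}^d)$ is the space of linear operators on $\mathbb{C}^d$; $I$ is the identity. *)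

From HB Require Import structures.
From mathcomp Require Import all_boot all_order all_algebra.
From mathcomp Require Import reals.
From mathcomp.real_closed Require Import complex.
Set Implicit Arguments. Unset Strict Implicit. Unset Printing Implicit Defensive.
Import Order.TTheory GRing.Theory Num.Theory.
Local Open Scope ring_scope.
Local Open Scope complex_scope.

Definition adj (R : realType) (d : nat) (A : 'M[R[i]]_d) : 'M[R[i]]_d :=
  map_mx Num.conj (A^T).

Definition rank_one_projector (R : realType) (d : nat) (P : 'M[R[i]]_d) : Prop :=
  adj P = P /\ P *m P = P /\ \rank P = 1%N.

Definition PhiP (R : realType) (d : nat) (P X : 'M[R[i]]_d) : 'M[R[i]]_d :=
  P *m X *m P.

Definition PhiSIC (R : realType) (d : nat) (X : 'M[R[i]]_d) : 'M[R[i]]_d :=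
  ((d * (d + 1))%:R)^-1 *: ((\tr X)%:M + X).

(* Every rank-one projector satisfies [P X P = tr(P X) P], so the hypothesis
   reads [Phi X = sum_k w_k tr(P_k X) P_k].  Since [Phi] is invertible, the
   [P_k] span all d^2 matrices; as there are at most d^2 of them they form a
   basis.  Expanding [Phi P_j = (P_j + I) / (d(d+1))] in this basis, with
   [I = d Phi I = sum_k d w_k P_k], and comparing coefficients gives
   [w_k tr(P_k P_j) = (d w_k + [k = j]) / (d(d+1))], which yields both the
   weights and the overlaps. *)
From HB Require Import structures.
From mathcomp Require Import all_boot all_order all_algebra.
From mathcomp Require Import reals.
From mathcomp.real_closed Require Import complex.
From mathcomp Require Import ring.
Set Implicit Arguments. Unset Strict Implicit. Unset Printing Implicit Defensive.
Import Order.TTheory GRing.Theory Num.Theory.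
Local Open Scope ring_scope.

Section RankOneIdempotent.

Variables (F : fieldType) (d : nat) (P : 'M[F]_d).
Hypotheses (P_idem : P *m P = P) (P_rank1 : \rank P = 1%N).

Lemma mxrank1_factor : exists (c : 'cV[F]_d) (r : 'rV[F]_d), P = c *m r.
Proof.
have := mulmx_base P; move: (col_base P) (row_base P).
by rewrite P_rank1 => c r <-; exists c, r.
Qed.

Lemma rank1_sandwich (X : 'M[F]_d) : P *m X *m P = \tr (P *m X) *: P.
Proof.
have [c [r ->]] := mxrank1_factor.
have -> : c *m r *m X *m (c *m r) = c *m (r *m X *m c) *m r by rewrite !mulmxA.
rewrite [r *m X *m c]mx11_scalar mul_mx_scalar -scalemxAl; congr (_ *: _).
by rewrite -[in RHS]mulmxA [RHS]mxtrace_mulC trace_mx11.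
Qed.

Lemma mxtrace_rank1_idem : \tr P = 1.
Proof.
have P_neq0 : P != 0 by rewrite -mxrank_eq0 P_rank1.
have := rank1_sandwich 1%:M; rewrite mulmx1 P_idem => /eqP.
rewrite -subr_eq0 -{1}[P]scale1r -scalerBl scaler_eq0 (negbTE P_neq0) orbF.
by rewrite subr_eq0 eq_sym => /eqP.
Qed.

End RankOneIdempotent.

Section SpanningFamily.

Variables (F : fieldType) (m p n : nat) (A : 'I_n -> 'M[F]_(m, p)).

Definition mxvec_rows : 'M[F]_(n, m * p) := \matrix_k mxvec (A k).

Lemma mul_mxvec_rows (c : 'rV[F]_n) :
  c *m mxvec_rows = mxvec (\sum_k c 0 k *: A k).
Proof.
rewrite mulmx_sum_row linear_sum; apply: eq_bigr => k _.
by rewrite rowK linearZ.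
Qed.

Hypothesis A_span : forall Y, exists c : 'I_n -> F, Y = \sum_k c k *: A k.

Lemma spanning_row_full : row_full mxvec_rows.
Proof.
rewrite -sub1mx; apply/row_subP => i; rewrite -[row i _]vec_mxK.
have [c ->] := A_span (vec_mx (row i 1%:M)).
have -> : \sum_k c k *: A k = \sum_k (\row_j c j) 0 k *: A k.
  by apply: eq_bigr => k _; rewrite mxE.
by rewrite -mul_mxvec_rows submxMl.
Qed.

Lemma spanning_card_ge : (m * p <= n)%N.
Proof. by rewrite -(eqP spanning_row_full) rank_leq_row. Qed.

Lemma spanning_coef_inj : (n <= m * p)%N ->
  forall c c' : 'I_n -> F,
  \sum_k c k *: A k = \sum_k c' k *: A k -> forall k, c k = c' k.
Proof.
move=> n_le c c' eq_sum k.
have free : row_free mxvec_rows.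
  by rewrite /row_free (eqP spanning_row_full) eqn_leq n_le spanning_card_ge.
have row_sum (e : 'I_n -> F) : \sum_k e k *: A k = \sum_k (\row_j e j) 0 k *: A k.
  by apply: eq_bigr => j _; rewrite mxE.
have : (\row_j c j) *m mxvec_rows = (\row_j c' j) *m mxvec_rows.
  by rewrite !mul_mxvec_rows -!row_sum eq_sum.
by move/(row_free_inj free)/rowP/(_ k); rewrite !mxE.
Qed.

End SpanningFamily.

Section PhiSIC.

Variables (R : realType) (d : nat).
Hypothesis d_gt0 : (0 < d)%N.

Local Notation a := ((d * (d + 1))%:R : R[i]).

Lemma natr_dim_neq0 : (d%:R : R[i]) != 0.
Proof. by rewrite pnatr_eq0 -lt0n. Qed.

Lemma natr_dimS_neq0 : (d%:R + 1 : R[i]) != 0.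
Proof. by rewrite natr1 pnatr_eq0. Qed.

Lemma natr_dimSIC : a = d%:R * (d%:R + 1).
Proof. by rewrite natrM natrD. Qed.

Lemma natr_dimSIC_neq0 : a != 0.
Proof. by rewrite natr_dimSIC mulf_neq0 ?natr_dim_neq0 ?natr_dimS_neq0. Qed.

Definition PhiSIC_inv (Y : 'M[R[i]]_d) : 'M[R[i]]_d :=
  a *: Y - (d%:R * \tr Y)%:M.

Lemma PhiSIC_invK : cancel PhiSIC_inv (@PhiSIC R d).
Proof.
move=> Y; have trX : \tr (PhiSIC_inv Y) = d%:R * \tr Y.
  rewrite /PhiSIC_inv linearB linearZ /= mxtrace_scalar -mulr_natr natr_dimSIC.
  ring.
by rewrite /PhiSIC trX /PhiSIC_inv addrC subrK scalerA mulVf ?scale1r ?natr_dimSIC_neq0.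
Qed.

Lemma PhiSIC_trace1 (X : 'M[R[i]]_d) :
  \tr X = 1 -> PhiSIC X = a^-1 *: (1%:M + X).
Proof. by move=> trX; rewrite /PhiSIC trX. Qed.

Lemma PhiSIC1 : PhiSIC (1%:M : 'M[R[i]]_d) = d%:R^-1 *: 1%:M.
Proof.
rewrite /PhiSIC mxtrace1 -[(d%:R)%:M]scalemx1 -[X in _ + X]scale1r -scalerDl scalerA.
congr (_ *: _); rewrite natr_dimSIC.
by field; rewrite natr_dim_neq0 natr_dimS_neq0.
Qed.

Lemma sic_weight_eq (x : R[i]) : x = a^-1 * (d%:R * x + 1) -> x = (d ^ 2)%:R^-1.
Proof.
move=> hx; have ax : a * x = d%:R * x + 1 by rewrite {1}hx mulVKf ?natr_dimSIC_neq0.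
have d2_neq0 : ((d ^ 2)%:R : R[i]) != 0 by rewrite natrX expf_neq0 ?natr_dim_neq0.
apply: (mulfI d2_neq0); rewrite mulfV //.
by rewrite -[RHS](addKr (d%:R * x)) -ax natr_dimSIC natrX; ring.
Qed.

Lemma sic_overlap_eq (x t : R[i]) :
  x != 0 -> x * t = a^-1 * (d%:R * x) -> t = (d + 1)%:R^-1.
Proof.
move=> x_neq0 hxt; apply: (mulfI x_neq0); rewrite hxt natr_dimSIC natrD.
by field; rewrite natr_dim_neq0 natr_dimS_neq0.
Qed.

End PhiSIC.

Local Open Scope complex_scope.

Theorem theorem5 (R : realType) (d n : nat) (Pi : 'I_n -> 'M[R[i]]_d)
    (w : 'I_n -> R) :
  (2 <= d)%N ->
  (n <= d ^ 2)%N ->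
  (forall k, rank_one_projector (Pi k)) ->
  (forall k, 0 < w k) ->
  \sum_(k < n) w k = 1 ->
  (forall X : 'M[R[i]]_d,
      PhiSIC X = \sum_(k < n) (w k)%:C *: PhiP (Pi k) X) ->
  [/\ n = (d ^ 2)%N,
      (forall k, w k = ((d ^ 2)%:R)^-1) &
      (forall k l, k != l -> \tr (Pi k *m Pi l) = ((d + 1)%:R)^-1)].
Proof.
move=> d_ge2 n_le proj w_gt0 _ Phi_eq.
have d_gt0 : (0 < d)%N by apply: leq_trans d_ge2.
have Pi_idem k : Pi k *m Pi k = Pi k by have [_ []] := proj k.
have Pi_rank1 k : \rank (Pi k) = 1%N by have [_ []] := proj k.
have Phi_expand X : PhiSIC X = \sum_k ((w k)%:C * \tr (Pi k *m X)) *: Pi k.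
  by rewrite Phi_eq; apply: eq_bigr => k _; rewrite /PhiP rank1_sandwich ?scalerA.
have Pi_span Y : exists c, Y = \sum_k c k *: Pi k.
  by eexists; rewrite -{1}(PhiSIC_invK d_gt0 Y) Phi_expand.
rewrite -mulnn in n_le.
have n_eq : n = (d ^ 2)%N.
  by apply/eqP; rewrite -mulnn eqn_leq n_le (spanning_card_ge Pi_span).
have coef_inj := spanning_coef_inj Pi_span n_le.
have one_expand : 1%:M = \sum_k (d%:R * (w k)%:C) *: Pi k.
  have := Phi_expand 1%:M; rewrite PhiSIC1 // => /(congr1 ( *:%R d%:R)).
  rewrite scalerA mulfV ?natr_dim_neq0 // scale1r scaler_sumr => ->.
  by apply: eq_bigr => k _; rewrite mulmx1 mxtrace_rank1_idem // mulr1 scalerA.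
have overlap j k : (w k)%:C * \tr (Pi k *m Pi j)
    = ((d * (d + 1))%:R)^-1 * (d%:R * (w k)%:C + (k == j)%:R).
  suff sums_eq : \sum_k ((w k)%:C * \tr (Pi k *m Pi j)) *: Pi k
      = \sum_k (((d * (d + 1))%:R)^-1 * (d%:R * (w k)%:C + (k == j)%:R)) *: Pi k.
    exact: coef_inj sums_eq k.
  rewrite -Phi_expand PhiSIC_trace1 ?mxtrace_rank1_idem //.
  rewrite one_expand (bigD1 j) //= [in RHS](bigD1 j) //= addrAC.
  rewrite -{2}[Pi j]scale1r -scalerDl scalerDr scalerA scaler_sumr eqxx.
  congr (_ + _); apply: eq_bigr => i /negbTE ->.
  by rewrite addr0 scalerA.
split=> // [k | k l k_neq_l].
- apply: (fmorph_inj (real_complex R)); rewrite fmorphV rmorph_nat.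
  apply: (sic_weight_eq d_gt0).
  by have := overlap k k; rewrite Pi_idem mxtrace_rank1_idem // mulr1 eqxx.
- have := overlap l k; rewrite (negbTE k_neq_l) addr0.
  move/(sic_overlap_eq d_gt0); apply.
  by rewrite (fmorph_eq0 (real_complex R)) gt_eqF ?w_gt0.
Qed.
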